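(* Let $S$ be a finite set of possibly partial distributions all with total mass $\textsc{Mass}(S)$. Then $$\int_0^{\textsc{Mass}(S)}\log_2\!\left(\frac{1}{\textsc{Profile}_S(x)}\right)dx=\int_0^1\frac{\textsc{Inv-Prof}_S(y)}{y\ln 2}\,dy.$$
   Context: A possibly partial distribution $p$ is a finite vector of nonnegative reals sorted non-increasingly with total mass $\textsc{Mass}(p)\le 1$. $\textsc{Sketch}_p(x)=p(i)$ for $x\in(\sum_{j>i}p(j),\sum_{j\ge i}p(j)]$, and $\textsc{Profile}_S(x)=\min_{p\in S}\textsc{Sketch}_p(x)$ for $x\in(0,\textsc{Mass}(S)]$. The inverse sketch is $\textsc{Inv-Sketch}_p(y)=\sum_j p(j)\,[p(j)\le y]$ for $y\in[0,1]$, and the inverse profile is $\textsc{Inv-Prof}_S(y)=\max_{p\in S}\textsc{Inv-Sketch}_p(y)$. *)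

From HB Require Import structures.
From mathcomp Require Import all_boot all_order all_algebra.
From mathcomp Require Import all_classical all_reals all_analysis.
Set Implicit Arguments. Unset Strict Implicit. Unset Printing Implicit Defensive.
Import Order.TTheory GRing.Theory Num.Theory.
Local Open Scope ring_scope.

Section Defs.
Variable R : realType.

(* A possibly partial distribution: finite vector (seq, index 0 = p(1))
   of nonnegative reals sorted non-increasingly with total mass <= 1. *)
Definition mass (p : seq R) : R := \sum_(a <- p) a.

Definition is_pdist (p : seq R) : bool :=
  all (fun a => 0 <= a) p && sorted (fun a b => b <= a) p && (mass p <= 1).

Definition tail_gt (p : seq R) (i : nat) : R := \sum_(a <- drop i.+1 p) a.
Definition tail_ge (p : seq R) (i : nat) : R := \sum_(a <- drop i p) a.

(* Sketch_p(x) = p(i) for x in (sum_{j>i} p(j), sum_{j>=i} p(j)];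
   these intervals are disjoint, so this is written as an indicator sum
   (value 0 outside (0, Mass p]). *)
Definition sketch (p : seq R) (x : R) : R :=
  \sum_(i < size p)
     if (tail_gt p i < x) && (x <= tail_ge p i) then nth 0 p i else 0.

Definition profile (S : seq (seq R)) (x : R) : R :=
  match S with
  | [::] => 0
  | p :: S' => foldr (fun q m => Num.min (sketch q x) m) (sketch p x) S'
  end.

Definition inv_sketch (p : seq R) (y : R) : R :=
  \sum_(a <- p | a <= y) a.

(* Inv-Prof_S(y) = max_{p in S} Inv-Sketch_p(y)  (inv_sketch >= 0, so 0 is
   a neutral starting value for nonempty S) *)
Definition inv_prof (S : seq (seq R)) (y : R) : R :=
  \big[Num.max/0]_(p <- S) inv_sketch p y.

Definition log2 (z : R) : R := ln z / ln 2.

End Defs.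

From mathcomp Require Import all_boot all_order all_algebra.
From mathcomp Require Import all_classical all_reals all_analysis.
From mathcomp Require Import measurable_realfun.
Set Implicit Arguments. Unset Strict Implicit. Unset Printing Implicit Defensive.
Import Order.TTheory GRing.Theory Num.Theory.
Local Open Scope ring_scope.
Local Open Scope classical_set_scope.
Import numFieldNormedType.Exports.

(* For 0 < x <= M the profile and the inverse profile form a Galois
   connection: [profile S x <= y] iff [x <= inv_prof S y]; for a single
   sorted distribution this is checked by induction on the vector, and a
   minimum (resp. maximum) over S preserves it.  Consequently, on the region
   0 < x <= M, 0 < y <= 1, x <= inv_prof S y, the weight 1 / (y ln 2) has
   x-sections [profile S x, 1], of integral log2 (1 / profile S x), and
   y-sections ]0, inv_prof S y], of integral inv_prof S y / (y ln 2).
   Tonelli's theorem equates the two iterated integrals. *)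

Section Log2Integral.
Variable R : realType.
Local Notation mu := (@lebesgue_measure R).

Lemma ln2_gt0 : 0 < ln (2 : R).
Proof. by rewrite ln_gt0 // ltr1n. Qed.

Lemma log2V (y : R) : 0 < y -> log2 y^-1 = - log2 y.
Proof. by move=> y_gt0; rewrite /log2 lnV ?posrE // mulNr. Qed.

Lemma is_derive_log2 (y : R) : 0 < y -> is_derive y 1 (@log2 R) (y * ln 2)^-1.
Proof.
move=> y_gt0; have -> : @log2 R = (ln 2)^-1 \*: @ln R.
  by apply/funext => z; rewrite /log2 mulrC.
by apply: is_derive_eq (is_deriveZ _ (is_derive1_ln y_gt0)) _; rewrite invfM mulrC.
Qed.

Lemma integral_deriv_log2 (a b : R) : 0 < a <= b ->
  (\int[mu]_(y in `[a, b]) ((y * ln 2)^-1)%:E = (log2 b - log2 a)%:E)%E.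
Proof.
case/andP => a_gt0; rewrite le_eqVlt => /orP[/eqP <- | ab].
  by rewrite set_itv1 integral_set1 subrr.
have log2_derivable (y : R) : 0 < y -> derivable (@log2 R) y 1.
  by move=> /is_derive_log2 [].
have log2_cont (y : R) : 0 < y -> {for y, continuous (@log2 R)}.
  by move=> /log2_derivable/derivable1_diffP/differentiable_continuous.
rewrite EFinB (continuous_FTC2 (F := @log2 R) ab) //.
- apply: continuous_in_subspaceT => y; rewrite inE /= in_itv /= => /andP[ay _].
  apply: (@continuousV _ _ (fun x : R => x * ln 2)); last exact: continuousZl.
  by rewrite mulf_neq0 ?gt_eqF ?ln2_gt0 ?(lt_le_trans a_gt0 ay).
- split.
  + by move=> y /[!in_itv] /andP[ay _]; apply/log2_derivable/(lt_trans a_gt0 ay).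
  + exact/cvg_at_right_filter/log2_cont.
  + exact/cvg_at_left_filter/log2_cont/(lt_trans a_gt0 ab).
- move=> y /[!in_itv] /andP[ay _].
  by rewrite derive1E; apply: derive_val; apply/is_derive_log2/(lt_trans a_gt0 ay).
Qed.

Lemma measurable_inv : measurable_fun [set: R] GRing.inv.
Proof.
have m0 : measurable [set 0 : R] by exact: measurable_set1.
rewrite -(setUv [set 0]); apply/measurable_funU => //; first exact: measurableC.
split.
- apply/measurable_restrictT => //=.
  rewrite (_ : _ \_ _ = cst 0) //; apply/funext => y; rewrite patchE.
  by case: ifPn => //; rewrite inE /= => ->; rewrite invr0.
- apply: open_continuous_measurable_fun.
    exact/closed_openC/accessible_closed_set1/hausdorff_accessible/Rhausdorff.
  by move=> y /[!inE] y_neq0; apply/inv_continuous/eqP.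
Qed.

Lemma measurable_inv_mulr (c : R) : measurable_fun [set: R] (fun y => (y * c)^-1).
Proof.
change (measurable_fun setT (GRing.inv \o *%R^~ c)).
exact: measurableT_comp measurable_inv (mulrr_measurable _).
Qed.

End Log2Integral.

Section Distributions.
Variable R : realType.
Implicit Types (p : seq R) (S : seq (seq R)) (a x y : R).

Lemma mass_cons a p : mass (a :: p) = a + mass p.
Proof. by rewrite /mass big_cons. Qed.

Lemma sketch_cons a p x :
  sketch (a :: p) x = (if mass p < x <= a + mass p then a else 0) + sketch p x.
Proof.
rewrite /sketch big_ord_recl /tail_gt /tail_ge /= drop0 big_cons.
by congr (_ + _); apply: eq_bigr => i _; rewrite /bump.
Qed.

Lemma inv_sketch_cons a p y :
  inv_sketch (a :: p) y = (if a <= y then a else 0) + inv_sketch p y.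
Proof. by rewrite /inv_sketch big_cons; case: ifP; rewrite ?add0r. Qed.

Section Nonnegative.
Context {p : seq R}.
Hypothesis p_ge0 : all (fun a => 0 <= a) p.

Lemma mass_ge0 : 0 <= mass p.
Proof. by rewrite /mass big_seq; apply: sumr_ge0 => a /(allP p_ge0). Qed.

Lemma mem_le_mass : {in p, forall a, a <= mass p}.
Proof.
move=> a pa; rewrite /mass (big_rem a pa) /= lerDl big_seq.
by apply: sumr_ge0 => b /mem_rem /(allP p_ge0).
Qed.

Lemma inv_sketch_le_mass y : inv_sketch p y <= mass p.
Proof.
rewrite /inv_sketch /mass big_mkcond !big_seq.
by apply: ler_sum => a /(allP p_ge0) a_ge0; case: ifP.
Qed.

Lemma inv_sketch0 : inv_sketch p 0 = 0.
Proof.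
rewrite /inv_sketch big_seq_cond big1 // => a /andP[/(allP p_ge0) a_ge0 a_le0].
by apply/eqP; rewrite eq_le a_le0 a_ge0.
Qed.

Lemma inv_sketch_nondecreasing : {homo inv_sketch p : y y' / y <= y'}.
Proof.
move=> y y' yy'; rewrite /inv_sketch [leLHS]big_mkcond [leRHS]big_mkcond !big_seq.
apply: ler_sum => a /(allP p_ge0) a_ge0.
by case: ifPn => [ay | _]; [rewrite (le_trans ay yy') | case: ifP].
Qed.

End Nonnegative.

Lemma inv_sketch_mass p y : all (fun a => a <= y) p -> inv_sketch p y = mass p.
Proof.
move=> /allP p_le_y; rewrite /inv_sketch /mass big_seq_cond [RHS]big_seq.
by apply: eq_bigl => a; apply/andb_idr/p_le_y.
Qed.

Lemma sketch_eq0 p x :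
  all (fun a => 0 <= a) p -> mass p < x -> sketch p x = 0.
Proof.
elim: p => [|a p IH] /=; first by rewrite /sketch big_ord0.
case/andP => a_ge0 p_ge0; rewrite mass_cons sketch_cons => mass_lt_x.
rewrite IH ?(le_lt_trans _ mass_lt_x) ?lerDr //.
by rewrite [x <= _]leNgt mass_lt_x andbF addr0.
Qed.

Lemma sketch_le_inv_sketch p x y :
  all (fun a => 0 <= a) p -> sorted (fun a b => b <= a) p -> 0 < x <= mass p ->
  (sketch p x <= y) = (x <= inv_sketch p y).
Proof.
elim: p => [|a p IH] /=.
  by rewrite /mass big_nil => _ _ /andP[/lt_le_trans x_le /x_le]; rewrite ltxx.
case/andP => a_ge0 p_ge0 sorted_ap /andP[x_gt0].
rewrite mass_cons sketch_cons inv_sketch_cons => x_le.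
have /allP p_le_a : all (fun b => b <= a) p.
  exact: order_path_min (rev_trans le_trans) sorted_ap.
have p_le_y : a <= y -> all (fun b => b <= y) p.
  by move=> ay; apply/allP => b /p_le_a /le_trans; apply.
have [x_le_mass | mass_lt_x] := leP x (mass p).
- rewrite /= add0r IH ?x_gt0 ?(path_sorted sorted_ap) //.
  case: ifPn => [ay | _]; last by rewrite add0r.
  by rewrite inv_sketch_mass ?p_le_y // (le_trans x_le_mass) ?lerDl.
- rewrite /= x_le sketch_eq0 // addr0.
  case: ifPn => [ay | _]; first by rewrite inv_sketch_mass ?p_le_y.
  apply/esym/negbTE; rewrite add0r -ltNge.
  exact: le_lt_trans (inv_sketch_le_mass p_ge0 _) mass_lt_x.
Qed.

Lemma profile_le_has S x y :
  S != [::] -> (profile S x <= y) = has (fun q => sketch q x <= y) S.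
Proof.
case: S => // p S _ /=.
by elim: S => [|q S IH] /=; rewrite ?orbF // ge_min IH orbCA.
Qed.

Lemma inv_prof_ge_has S x y :
  0 < x -> (x <= inv_prof S y) = has (fun q => x <= inv_sketch q y) S.
Proof.
move=> x_gt0; rewrite /inv_prof; elim: S => [|q S IH] /=.
  by rewrite big_nil leNgt x_gt0.
by rewrite big_cons le_max IH.
Qed.

Lemma inv_prof_ge0 S y : 0 <= inv_prof S y.
Proof. exact: bigmax_ge_id. Qed.

Section CommonMass.
Variables (S : seq (seq R)) (M : R).
Hypotheses (S_neq0 : S != [::]) (S_pdist : forall {p}, p \in S -> is_pdist p).
Hypothesis S_mass : forall {p}, p \in S -> mass p = M.

Let S_ge0 {p} : p \in S -> all (fun a => 0 <= a) p.
Proof. by move=> /S_pdist /andP[/andP[]]. Qed.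

Let S_inhabited : exists p, p \in S.
Proof. by case: S S_neq0 => // p S' _; exists p; exact: mem_head. Qed.

Local Notation mu := (@lebesgue_measure R).

Lemma common_mass_ge0 : 0 <= M.
Proof. by have [p pS] := S_inhabited; rewrite -(S_mass pS) mass_ge0 ?S_ge0. Qed.

Lemma profile_le_inv_prof x y :
  0 < x <= M -> (profile S x <= y) = (x <= inv_prof S y).
Proof.
move=> /[dup] /andP[x_gt0 _] x_itv.
rewrite profile_le_has // inv_prof_ge_has //; apply: eq_in_has => p pS.
case/andP: (S_pdist pS) => /andP[_ p_sorted] _.
by rewrite sketch_le_inv_sketch ?S_ge0 ?S_mass.
Qed.

Lemma inv_prof_le_mass y : inv_prof S y <= M.
Proof.
rewrite /inv_prof big_seq; apply: bigmax_le => [|p pS].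
  exact: common_mass_ge0.
by rewrite -(S_mass pS) inv_sketch_le_mass ?S_ge0.
Qed.

Lemma inv_prof_nondecreasing : {homo inv_prof S : y y' / y <= y'}.
Proof.
move=> y y' yy'; rewrite /inv_prof !big_seq.
elim/big_ind2: _ => // [a b c d|p pS]; first exact: le_max2.
exact/inv_sketch_nondecreasing/yy'/S_ge0.
Qed.

Lemma inv_prof0 : inv_prof S 0 = 0.
Proof.
rewrite /inv_prof big_seq; elim/big_rec: _ => // p m pS ->.
by rewrite inv_sketch0 ?S_ge0 ?maxxx.
Qed.

Lemma profile_itv x : 0 < x <= M -> 0 < profile S x <= 1.
Proof.
move=> /[dup] /andP[x_gt0 x_le_M] x_itv.
rewrite ltNge !profile_le_inv_prof // inv_prof0 -ltNge x_gt0 /=.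
have [p pS] := S_inhabited; rewrite inv_prof_ge_has //; apply/hasP; exists p => //.
have /andP[_ mass_le1] := S_pdist pS.
rewrite inv_sketch_mass ?S_mass //; apply/allP => a pa.
exact: le_trans (mem_le_mass (S_ge0 pS) pa) mass_le1.
Qed.

Definition inv_prof_hypograph : set (R * R) :=
  `]0, M] `*` `]0, 1] `&` [set z | z.1 <= inv_prof S z.2].

Definition hypograph_weight (z : R * R) : R :=
  \1_inv_prof_hypograph z * (z.2 * ln 2)^-1.

Lemma mem_inv_prof_hypograph x y : ((x, y) \in inv_prof_hypograph) =
  [&& 0 < x <= M, 0 < y <= 1 & x <= inv_prof S y].
Proof.
apply/idP/and3P; rewrite inE /inv_prof_hypograph /= !in_itv /=.
- by move=> [[x_itv y_itv] x_le].
- by move=> [x_itv y_itv x_le].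
Qed.

Lemma hypograph_weight_ge0 z : 0 <= hypograph_weight z.
Proof.
case: z => x y; rewrite /hypograph_weight indicE mem_inv_prof_hypograph.
have [/and3P[_ /andP[y_gt0 _] _] | _] := boolP [&& _, _ & _].
  by rewrite mul1r invr_ge0 mulr_ge0 ?ltW ?ln2_gt0.
by rewrite mul0r.
Qed.

Lemma measurable_inv_prof_hypograph : measurable inv_prof_hypograph.
Proof.
apply: measurableI; first by apply: measurableX; exact: measurable_itv.
have m_inv_prof : measurable_fun setT (inv_prof S).
  by apply: nondecreasing_measurable => //; exact: inv_prof_nondecreasing.
have := measurable_fun_ler measurable_fst (measurableT_comp m_inv_prof measurable_snd).
move=> /(_ measurableT [set true]) /(_ I); rewrite setTI.
by congr measurable; apply/seteqP; split => z /=.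
Qed.

Lemma measurable_hypograph_weight : measurable_fun setT hypograph_weight.
Proof.
apply: measurable_funM.
  apply: measurable_indic; exact: measurable_inv_prof_hypograph.
exact: measurableT_comp (@measurable_inv_mulr R (ln 2)) measurable_snd.
Qed.

Lemma integral_hypograph_weight_fst x :
  (\int[mu]_y (hypograph_weight (x, y))%:E =
   ((fun x => (log2 (profile S x)^-1)%:E) \_ [set` `]0, M]%R]) x)%E.
Proof.
rewrite patchE mem_setE in_itv /=.
have [x_itv | x_out] := boolP (0 < x <= M); last first.
  rewrite (eq_integral (cst 0%E)) ?integral0 // => y _.
  by rewrite /hypograph_weight indicE mem_inv_prof_hypograph (negbTE x_out) mul0r.
have /andP[P_gt0 P_le1] := profile_itv x_itv.
have -> : log2 (profile S x)^-1 = log2 1 - log2 (profile S x).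
  by rewrite log2V // /log2 ln1 mul0r sub0r.
rewrite -integral_deriv_log2 ?P_gt0 // [RHS]integral_mkcond.
apply: eq_integral => y _.
rewrite patchE /hypograph_weight indicE mem_inv_prof_hypograph x_itv /=.
rewrite -profile_le_inv_prof // mem_setE in_itv /=.
have [Py | _] := boolP (profile S x <= y); last by rewrite andbF mul0r.
by rewrite (lt_le_trans P_gt0 Py) /=; case: (y <= 1); rewrite ?mul1r ?mul0r.
Qed.

Lemma integral_hypograph_weight_snd y :
  (\int[mu]_x (hypograph_weight (x, y))%:E =
   ((fun y => (inv_prof S y / (y * ln 2))%:E) \_ [set` `]0, 1]%R]) y)%E.
Proof.
rewrite patchE mem_setE in_itv /=.
have [y_itv | y_out] := boolP (0 < y <= 1); last first.
  rewrite (eq_integral (cst 0%E)) ?integral0 // => x _.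
  by rewrite /hypograph_weight indicE mem_inv_prof_hypograph (negbTE y_out) andbF mul0r.
transitivity (\int[mu]_(x in [set` `]0, inv_prof S y]%R]) (cst ((y * ln 2)^-1)%:E) x)%E.
  rewrite [RHS]integral_mkcond; apply: eq_integral => x _.
  rewrite patchE /hypograph_weight indicE mem_inv_prof_hypograph y_itv mem_setE in_itv /=.
  have [x_le | _] := boolP (x <= inv_prof S y); last by rewrite !andbF mul0r.
  rewrite (le_trans x_le (inv_prof_le_mass y)) !andbT.
  by case: (0 < x); rewrite ?mul1r ?mul0r.
rewrite integral_cst //; have /= -> := lebesgue_measure_itv `]0, inv_prof S y]%R.
rewrite lte_fin.
have [E_gt0 | E_le0] := ltP 0 (inv_prof S y).
  by rewrite -EFinM subr0 mulrC.
have -> : inv_prof S y = 0 by apply/eqP; rewrite eq_le E_le0 inv_prof_ge0.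
by rewrite mul0r mule0.
Qed.

End CommonMass.

End Distributions.

Theorem lemma3 (R : realType) (S : seq (seq R)) (M : R) :
  S != [::] ->
  (forall p, p \in S -> is_pdist p) ->
  (forall p, p \in S -> mass p = M) ->
  (\int[(@lebesgue_measure R)]_(x in [set` `]0, M]%R]) (log2 (profile S x)^-1)%:E =
   \int[(@lebesgue_measure R)]_(y in [set` `]0, 1]%R]) (inv_prof S y / (y * ln 2))%:E)%E.
Proof.
move=> S_neq0 S_pdist S_mass; rewrite [LHS]integral_mkcond [RHS]integral_mkcond.
transitivity (\int[lebesgue_measure]_x \int[lebesgue_measure]_y
                (hypograph_weight S M (x, y))%:E)%E.
  by apply: eq_integral => x _; rewrite integral_hypograph_weight_fst.
transitivity (\int[lebesgue_measure]_y \int[lebesgue_measure]_x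
                (hypograph_weight S M (x, y))%:E)%E.
  apply: (fubini_tonelli (m1 := @lebesgue_measure R) (m2 := @lebesgue_measure R)
           (fun z => (hypograph_weight S M z)%:E)).
    by apply/measurable_EFinP; apply: measurable_hypograph_weight.
  by move=> z; rewrite lee_fin hypograph_weight_ge0.
by apply: eq_integral => y _; rewrite integral_hypograph_weight_snd.
Qed.
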